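(* Let $\alpha\in(0,1]$, $\lambda_\alpha=\sqrt{\log(1/\alpha)/2}$, $p_1,\dots,p_m\in[0,1]$, and consider the DKW local tests $\varphi_A=\max_{t\in[0,1]}\mathbf 1\{i_A(t)>|A|t+\sqrt{|A|}\lambda_\alpha\}$. Let $$\hat m_0=\min_{t\in[0,1)}\Big\lfloor\Big(\frac{\lambda_\alpha}{2(1-t)}+\sqrt{\frac{\lambda_\alpha^2}{4(1-t)^2}+\frac{m-i(t)}{1-t}}\Big)^2\Big\rfloor\wedge m,$$ let $\sigma$ be a permutation with $p_{\sigma(1)}\le\dots\le p_{\sigma(m)}$, $p_{(k)}=p_{\sigma(k)}$, $R_k=\{\sigma(1),\dots,\sigma(k)\}$, $\zeta_k=k\wedge\lfloor\hat m_0p_{(k)}+\sqrt{\hat m_0}\lambda_\alpha\rfloor$, and $\mathfrak R=(R_k,\zeta_k)_{1\le k\le m}$. Then $\hat V^{\mathrm{IP}}_\varphi(S)=\hat V^{\mathrm{JER}}_{\mathfrak R}(S)$ for every $S\subseteq\{1,\dots,m\}$.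
   Context: $i_A(t)=\#\{j\in A:p_j\le t\}$, $i(t)=i_{\{1,\dots,m\}}(t)$. $\hat V^{\mathrm{IP}}_\varphi(S)=\max\{|A\cap S|:A\subseteq\{1,\dots,m\},\varphi_A=0\}$. For a reference family $(R_k,\zeta_k)_{k\in\mathcal K}$: $\mathfrak A(\mathfrak R)=\{A\subseteq\{1,\dots,m\}:\forall k,|R_k\cap A|\le\zeta_k\}$ and $\hat V^{\mathrm{JER}}_{\mathfrak R}(S)=\max_{A\in\mathfrak A(\mathfrak R)}|S\cap A|$. *)

From HB Require Import structures.
From mathcomp Require Import all_boot all_order all_algebra perm.
From mathcomp Require Import all_classical all_reals exp.
Set Implicit Arguments. Unset Strict Implicit. Unset Printing Implicit Defensive.
Import Order.TTheory GRing.Theory Num.Theory.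
Local Open Scope ring_scope.

Section Defs.
Variables (R : realType) (m : nat) (p : 'I_m -> R) (alpha : R).

Definition lam : R := Num.sqrt (ln (1 / alpha) / 2).

Definition iA (A : {set 'I_m}) (t : R) : nat := #|[set j in A | p j <= t]|.
Definition iall (t : R) : nat := iA [set: 'I_m] t.

Definition phiDKW (A : {set 'I_m}) : bool :=
  `[< exists t : R, 0 <= t <= 1 /\
        #|A|%:R * t + Num.sqrt (#|A|%:R) * lam < (iA A t)%:R >].

Definition VIP (S : {set 'I_m}) : nat :=
  \max_(A : {set 'I_m} | ~~ phiDKW A) #|A :&: S|.

Definition gm0 (t : R) : R :=
  (lam / (2 * (1 - t)) +
   Num.sqrt (lam ^+ 2 / (4 * (1 - t) ^+ 2) + (m%:R - (iall t)%:R) / (1 - t))) ^+ 2.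

(* n is a candidate for  min_{t in [0,1)} floor(gm0 t) /\ m *)
Definition m0cand (n : nat) : bool :=
  `[< n = m \/ exists t : R, 0 <= t < 1 /\ Num.floor (gm0 t) = n%:Z >].

Lemma m0cand_ex : exists n, m0cand n.
Proof. by exists m; apply/asboolP; left. Qed.

Definition m0hat : nat := ex_minn m0cand_ex.

Variable sigma : 'S_m.
(* for k : 'I_m, the paper's index is k+1: R_{k+1} = {sigma(1..k+1)} *)
Definition Rk (k : 'I_m) : {set 'I_m} := [set sigma j | j : 'I_m & (j <= k)%N].
Definition zetak (k : 'I_m) : int :=
  Num.min (k.+1)%:Z
    (Num.floor (m0hat%:R * p (sigma k) + Num.sqrt (m0hat%:R) * lam)).

Definition JERadm (A : {set 'I_m}) : bool :=
  [forall k : 'I_m, (#|Rk k :&: A|%:Z <= zetak k)].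

Definition VJER (S : {set 'I_m}) : nat :=
  \max_(A : {set 'I_m} | JERadm A) #|S :&: A|.
End Defs.

From HB Require Import structures.
From mathcomp Require Import all_boot all_order all_algebra perm.
From mathcomp Require Import all_classical all_reals.
From mathcomp Require Import ring lra zify.
Set Implicit Arguments. Unset Strict Implicit. Unset Printing Implicit Defensive.
Import Order.TTheory GRing.Theory Num.Theory.
Local Open Scope ring_scope.

(* A set A accepted by all DKW local tests has |A| <= m0hat (the test at t is
   exactly the quadratic inequality solved by the root in the definition of
   m0hat), so |R_k :&: A| <= i_A(p_(k)) <= m0hat p_(k) + sqrt(m0hat) lam: A
   satisfies every JER constraint.  Conversely, pad the part S :&: A of a
   JER-admissible A with the indices of largest p-values until it has m0hat
   elements (or all indices are used).  At a threshold t below every padded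
   p-value, the padded set meets {p <= t} only inside A, where the reference
   family controls it; otherwise it contains all of {p > t}, so its count at t
   is m0hat - (m - i(t)), which the definition of m0hat bounds. *)

Lemma le_add_sqrt_sqr_add (R : rcfType) (h u y : R) : 0 <= h -> 0 <= u -> 0 <= y ->
  (y <= h + Num.sqrt (h ^+ 2 + u)) = (y ^+ 2 - 2 * h * y <= u).
Proof.
move=> h0 u0 y0; set q := Num.sqrt _.
have q0 : 0 <= q := sqrtr_ge0 _.
have qE : q ^+ 2 = h ^+ 2 + u by rewrite sqr_sqrtr // addr_ge0 // sqr_ge0.
have hq : h <= q by rewrite -ler_sqr ?nnegrE // qE lerDl.
apply/idP/idP => H; nra.
Qed.

Lemma le_sqr_quad_root (R : rcfType) (s l M a : R) :
  0 < s -> 0 <= l -> 0 <= M -> 0 <= a ->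
  (a <= (l / (2 * s) + Num.sqrt (l ^+ 2 / (4 * s ^+ 2) + M / s)) ^+ 2)
  = (s * a - l * Num.sqrt a <= M).
Proof.
move=> s0 l0 M0 a0; set h := l / (2 * s); set y := Num.sqrt a.
have h0 : 0 <= h by rewrite divr_ge0 // mulr_ge0 // ltW.
have u0 : 0 <= M / s by rewrite divr_ge0 // ltW.
have y0 : 0 <= y := sqrtr_ge0 a.
have -> : l ^+ 2 / (4 * s ^+ 2) = h ^+ 2 by rewrite /h; field; rewrite gt_eqF.
rewrite -{1}(sqr_sqrtr a0) -/y ler_sqr ?nnegrE ?addr_ge0 ?sqrtr_ge0 //.
rewrite le_add_sqrt_sqr_add // -(ler_pM2l s0) sqr_sqrtr //.
by congr (_ <= _); rewrite /h /y; field; rewrite gt_eqF.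
Qed.

Section LocalTests.
Variables (R : realType) (m : nat) (p : 'I_m -> R) (alpha : R).

Implicit Types (A B : {set 'I_m}) (n : nat) (t : R).

Local Notation m0 := (m0hat p alpha).
Local Notation below t := [set j | p j <= t].

Definition dkw_bound (n : nat) (t : R) : R := n%:R * t + Num.sqrt n%:R * lam alpha.

Lemma lam_ge0 : 0 <= lam alpha.
Proof. exact: sqrtr_ge0. Qed.

Lemma dkw_bound_ge0 n t : 0 <= t -> 0 <= dkw_bound n t.
Proof. by move=> t0; rewrite addr_ge0 ?mulr_ge0 ?sqrtr_ge0 ?lam_ge0. Qed.

Lemma dkw_bound_homo_n n n' t : (n <= n')%N -> 0 <= t ->
  dkw_bound n t <= dkw_bound n' t.
Proof.
by move=> le_nn' t0; rewrite lerD ?ler_wpM2r ?lam_ge0 ?ler_sqrt ?ler_nat.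
Qed.

Lemma dkw_bound_homo_t n t t' : t <= t' -> dkw_bound n t <= dkw_bound n t'.
Proof. by move=> le_tt'; rewrite lerD2r ler_wpM2l. Qed.

Lemma iAE A t : iA p A t = #|A :&: below t|.
Proof. by apply: eq_card => j; rewrite !inE. Qed.

Lemma card_below t : iall p t + #|~: below t| = m.
Proof.
by rewrite /iall iAE finset.setTI; have := cardsC (below t); rewrite card_ord.
Qed.

Lemma card_le_iA A t : (#|A| <= iA p A t + #|~: below t|)%N.
Proof.
rewrite iAE -[X in (X <= _)%N](cardsID (below t) A) leq_add2l.
by apply: subset_leq_card; rewrite finset.setDE finset.subsetIr.
Qed.

Lemma phiDKWPn A :
  reflect (forall t, 0 <= t <= 1 -> (iA p A t)%:R <= dkw_bound #|A| t)
          (~~ phiDKW p alpha A).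
Proof.
apply: (iffP (asboolPn _)) => [notphi t t01 | bound [t [t01]]].
  by rewrite leNgt; apply/negP => lt; apply: notphi; exists t.
by apply/negP; rewrite -leNgt; apply: bound.
Qed.

Lemma le_gm0 t n : 0 <= t < 1 ->
  (n%:R <= gm0 p alpha t) =
  ((1 - t) * n%:R - lam alpha * Num.sqrt n%:R <= m%:R - (iall p t)%:R).
Proof.
case/andP=> t0 t1; rewrite /gm0 le_sqr_quad_root ?subr_gt0 ?lam_ge0 //.
by rewrite subr_ge0 ler_nat; have := card_below t; lia.
Qed.

Lemma m0hat_le_m : (m0 <= m)%N.
Proof. by rewrite /m0hat; case: ex_minnP => n _ -> //; apply/asboolP; left. Qed.

Lemma m0hat_le_gm0 t : 0 <= t < 1 -> m0%:R <= gm0 p alpha t.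
Proof.
move=> t01; have fl0 : 0 <= Num.floor (gm0 p alpha t) by rewrite floor_ge0 sqr_ge0.
have [n nE] : exists n : nat, Num.floor (gm0 p alpha t) = n%:Z.
  by exists `|Num.floor (gm0 p alpha t)|%N; rewrite gez0_abs.
apply: le_trans (floor_le _); rewrite nE -(pmulrn (R := R)) /= ler_nat.
by rewrite /m0hat; case: ex_minnP => k _ -> //; apply/asboolP; right; exists t.
Qed.

Lemma card_le_m0hat A : ~~ phiDKW p alpha A -> (#|A| <= m0)%N.
Proof.
move/phiDKWPn=> bound; rewrite /m0hat; case: ex_minnP => n.
rewrite /m0cand => /asboolP[-> _|[t [t01 floorE]] _].
  by rewrite -[X in (_ <= X)%N]card_ord max_card.
have t01' : 0 <= t <= 1 by case/andP: t01 => -> /ltW.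
rewrite -lez_nat -floorE floor_ge_int le_gm0 //.
have := bound t t01'; rewrite /dkw_bound.
have /(congr1 (fun k => k%:R : R)) := card_below t; rewrite natrD.
have := card_le_iA A t; rewrite -(ler_nat R) natrD.
lra.
Qed.

Lemma iA_le_dkw_m0hat B t : #|B| = m0 -> ~: below t \subset B -> 0 <= t <= 1 ->
  (iA p B t)%:R <= dkw_bound m0 t.
Proof.
move=> cardB sub /andP[t0 t1].
have /(congr1 (fun k => k%:R : R)) : (iA p B t + #|~: below t| = m0)%N.
  by rewrite -cardB iAE -(cardsID (below t) B) finset.setDE (finset.setIidPr sub).
rewrite natrD /dkw_bound => iB.
have s0 : 0 <= Num.sqrt (m0%:R : R) * lam alpha by rewrite mulr_ge0 ?sqrtr_ge0 ?lam_ge0.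
have [t_lt1|t_ge1] := ltP t 1.
  have t01 : 0 <= t < 1 by rewrite t0.
  have := m0hat_le_gm0 t01; rewrite le_gm0 //.
  have /(congr1 (fun k => k%:R : R)) := card_below t; rewrite natrD.
  lra.
have : 0 <= (#|~: below t|%:R : R) by [].
have : (m0%:R : R) <= m0%:R * t by rewrite ler_peMr.
lra.
Qed.
End LocalTests.

Lemma discrete_ivt (f : nat -> nat) v n : (v <= f 0)%N -> (f n <= v)%N ->
  (forall k, f k <= (f k.+1).+1)%N -> exists k, f k = v.
Proof.
move=> le_v_f0 le_fn_v step; elim: n le_fn_v => [|n IHn] le_fn_v.
  by exists 0%N; apply/eqP; rewrite eqn_leq le_fn_v.
have [le_fn_v'|lt_v_fn] := leqP (f n) v; first exact: IHn.
by exists n.+1; have := step n; lia.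
Qed.

Section SortedReferenceFamily.
Variables (R : realType) (m : nat) (p : 'I_m -> R) (alpha : R) (sigma : 'S_m).
Hypothesis p_unit : forall j, 0 <= p j <= 1.
Hypothesis p_sorted : forall i j : 'I_m, (i <= j)%N -> p (sigma i) <= p (sigma j).
Implicit Types (A B C S : {set 'I_m}) (t : R).

Local Notation m0 := (m0hat p alpha).
Local Notation below t := [set j | p j <= t].

Lemma card_Rk k : (#|Rk sigma k| <= k.+1)%N.
Proof.
rewrite /Rk card_imset; last exact: perm_inj.
have -> : [set j : 'I_m | (j <= k)%N] = widen_ord (ltn_ord k) @: 'I_k.+1.
  apply/setP => j; rewrite inE; apply/idP/imsetP => [le_jk | [i _ ->] /=].
    by exists (Ordinal (le_jk : (j < k.+1)%N)) => //; apply: val_inj.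
  by rewrite -ltnS.
by rewrite -[X in (_ <= X)%N](card_ord k.+1) leq_imset_card.
Qed.

Lemma Rk_sub_below k : Rk sigma k \subset below (p (sigma k)).
Proof.
by apply/fintype.subsetP => x /imsetP[j]; rewrite !inE => le_jk ->; exact: p_sorted.
Qed.

Lemma accepted_JERadm A : ~~ phiDKW p alpha A -> JERadm p alpha sigma A.
Proof.
move=> /[dup] accA /phiDKWPn bound; apply/forallP => k; rewrite /zetak le_min.
apply/andP; split.
  by rewrite lez_nat (leq_trans (subset_leq_card (finset.subsetIl _ _)) (card_Rk k)).
have t01 := p_unit (sigma k); have /andP[t0 _] := t01.
rewrite floor_ge_int -(pmulrn (R := R)) /=.
apply: le_trans (dkw_bound_homo_n alpha (card_le_m0hat accA) t0).
apply: le_trans (bound _ t01); rewrite ler_nat iAE; apply: subset_leq_card.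
by rewrite finset.setIC finset.setIS // Rk_sub_below.
Qed.

Lemma JERadm_iA_le A t : JERadm p alpha sigma A -> 0 <= t ->
  (iA p A t)%:R <= dkw_bound alpha m0 t.
Proof.
move=> /forallP admA t0; rewrite iAE.
have [->|[j jAP]] := set_0Vmem (A :&: below t).
  by rewrite cards0 dkw_bound_ge0.
have Pj : p (sigma (sigma^-1 j)%g) <= t.
  by rewrite permKV; move: jAP; rewrite !inE => /andP[].
case: (@arg_maxnP _ _ (fun k => p (sigma k) <= t) val Pj) => k Pk kmax.
have sub : A :&: below t \subset Rk sigma k :&: A.
  apply/fintype.subsetP => x; rewrite !inE => /andP[xA xP]; rewrite xA andbT.
  by rewrite -(permKV sigma x); apply: imset_f; rewrite inE; apply: kmax; rewrite permKV.
have := admA k; rewrite /zetak le_min => /andP[_].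
rewrite floor_ge_int -(pmulrn (R := R)) /= => zk.
apply: le_trans (dkw_bound_homo_t _ _ Pk); apply: le_trans zk.
by rewrite ler_nat subset_leq_card.
Qed.

Definition sigma_tail (K : nat) : {set 'I_m} := [set x | (K <= (sigma^-1)%g x)%N].

Lemma sigma_tail_above K j t : j \in sigma_tail K -> p j <= t ->
  ~: below t \subset sigma_tail K.
Proof.
rewrite inE => le_K_j le_pj_t; apply/fintype.subsetP => x; rewrite !inE -ltNge => lt_t_px.
apply: leq_trans le_K_j _; rewrite leqNgt; apply/negP => /ltnW /p_sorted.
by rewrite !permKV => le_px_pj; move: lt_t_px; rewrite ltNge (le_trans le_px_pj).
Qed.

Lemma card_setU_sigma_tail_leS C K :
  (#|C :|: sigma_tail K| <= (#|C :|: sigma_tail K.+1|).+1)%N.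
Proof.
set at_K := [set x | (sigma^-1)%g x == K :> nat].
have sub : C :|: sigma_tail K \subset (C :|: sigma_tail K.+1) :|: at_K.
  apply/fintype.subsetP => x; rewrite !inE leq_eqVlt eq_sym.
  by case/or3P=> ->; rewrite ?orbT.
have card_at_K : (#|at_K| <= 1)%N.
  apply/card_le1_eqP => x y; rewrite !inE => /eqP xK /eqP yK.
  by apply: (perm_inj (s := (sigma^-1)%g)); apply: val_inj => /=; rewrite xK yK.
apply: leq_trans (subset_leq_card sub) _.
have := cardsUI (C :|: sigma_tail K.+1) at_K; lia.
Qed.

Lemma exists_sigma_pad C n : (n <= m)%N -> exists K,
  (n <= #|C :|: sigma_tail K|)%N /\
  (#|C :|: sigma_tail K| = n \/ (m <= K)%N).
Proof.
move=> le_nm; have pad_m : C :|: sigma_tail m = C.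
  by apply/setP => x; rewrite !inE leqNgt ltn_ord orbF.
have [le_n_C|lt_C_n] := leqP n #|C|.
  by exists m; rewrite pad_m; split => //; right.
have card_pad_0 : #|C :|: sigma_tail 0| = m.
  by rewrite -[RHS](card_ord m); apply: eq_card => x; rewrite !inE orbT.
have [|||K cardK] := @discrete_ivt (fun K => #|C :|: sigma_tail K|) n m.
- by rewrite card_pad_0.
- by rewrite pad_m ltnW.
- exact: card_setU_sigma_tail_leS.
by exists K; rewrite cardK; split => //; left.
Qed.

Lemma padding_accepted A C K : JERadm p alpha sigma A -> C \subset A ->
  (m0 <= #|C :|: sigma_tail K|)%N ->
  #|C :|: sigma_tail K| = m0 \/ (m <= K)%N ->
  ~~ phiDKW p alpha (C :|: sigma_tail K).
Proof.
move=> admA sub_CA ge_B_m0 eq_B_m0; apply/phiDKWPn => t t01.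
have /andP[t0 _] := t01.
have [[j j_tail le_pj_t]|tail_above_t] :=
  pselect (exists2 j, j \in sigma_tail K & p j <= t).
  have cardB : #|C :|: sigma_tail K| = m0.
    case: eq_B_m0 => // le_mK; move: j_tail; rewrite inE leqNgt.
    by rewrite (leq_trans (ltn_ord _) le_mK).
  rewrite cardB; apply: iA_le_dkw_m0hat => //.
  exact: fintype.subset_trans (sigma_tail_above j_tail le_pj_t) (finset.subsetUr _ _).
apply: le_trans (dkw_bound_homo_n alpha ge_B_m0 t0).
apply: le_trans (JERadm_iA_le admA t0); rewrite ler_nat !iAE subset_leq_card //.
apply/fintype.subsetP => x; rewrite !inE => /andP[/orP[xC|x_tail] xP].
  by rewrite (fintype.subsetP sub_CA) ?xP.
by case: tail_above_t; exists x; rewrite ?inE.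
Qed.

Lemma VIP_le_VJER S : (VIP p alpha S <= VJER p alpha sigma S)%N.
Proof.
apply/bigmax_leqP => A accA; rewrite finset.setIC.
by apply: (leq_bigmax_cond (F := fun A => #|S :&: A|)); apply: accepted_JERadm.
Qed.

Lemma VJER_le_VIP S : (VJER p alpha sigma S <= VIP p alpha S)%N.
Proof.
apply/bigmax_leqP => A admA.
have [K [ge_B_m0 eq_B_m0]] := exists_sigma_pad (S :&: A) (m0hat_le_m p alpha).
have accB := padding_accepted admA (finset.subsetIr S A) ge_B_m0 eq_B_m0.
apply: leq_trans _ (leq_bigmax_cond (F := fun B => #|B :&: S|) _ accB).
by rewrite subset_leq_card // finset.subsetI finset.subsetUl finset.subsetIl.
Qed.

End SortedReferenceFamily.

Theorem mainTheorem12 (R : realType) (m : nat) (alpha : R) (p : 'I_m -> R)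
  (sigma : 'S_m)
  (halpha : 0 < alpha <= 1)
  (hp : forall j, 0 <= p j <= 1)
  (hsigma : forall i j : 'I_m, (i <= j)%N -> p (sigma i) <= p (sigma j)) :
  forall S : {set 'I_m}, VIP p alpha S = VJER p alpha sigma S.
Proof.
by move=> S; apply/eqP; rewrite eqn_leq VIP_le_VJER // VJER_le_VIP.
Qed.
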